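(* There exists a two-dimensional cellular automaton $(\mathcal{A}^{\mathbb{Z}^2},F)$ which is not sensitive to initial conditions and has no equicontinuous point. (In fact one can take $|\mathcal{A}|=12$ and a Moore neighborhood of radius $2$.) In particular, unlike the one-dimensional case, the classes $\mathcal{E}_q$ and $\mathcal{S}$ do not partition the set of two-dimensional cellular automata, i.e. the class $\mathcal{N}$ is nonempty.
   Context: Let $\mathcal{A}$ be a finite set and $\mathbb{M}=\mathbb{Z}^2$. The configuration space $\mathcal{A}^{\mathbb{M}}$ carries the product of discrete topologies, metrized by $d(x,y)=2^{-\min\{\|i\|_\infty : x_i\neq y_i,\ i\in\mathbb{M}\}}$. A (2D) cellular automaton is a map $F:\mathcal{A}^{\mathbb{M}}\to\mathcal{A}^{\mathbb{M}}$ of the form $F(x)_m=f((x_{m+u})_{u\in\mathbb{U}})$ for a finite neighborhood $\mathbb{U}\subset\mathbb{M}$ and a local rule $f:\mathcal{A}^{\mathbb{U}}\to\mathcal{A}$; its radius is $\max\{\|u\|_\infty:u\in\mathbb{U}\}$. A point $x$ is an equicontinuous point of $F$ if for every $\epsilon>0$ there is $\delta>0$ such that $d(x,y)<\delta$ implies $d(F^n(x),F^n(y))<\epsilon$ for all $n\in\mathbb{N}$. $F$ is sensitive if there is $\epsilon>0$ such that for all $\delta>0$ and all $x$ there exist $y$ and $n\in\mathbb{N}$ with $d(x,y)<\delta$ and $d(F^n(x),F^n(y))>\epsilon$. $\mathcal{E}_q$ denotes the class of cellular automata having at least one equicontinuous point, $\mathcal{S}$ the class of sensitive cellular automata, and $\mathcal{N}$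 the class of cellular automata that are in neither $\mathcal{E}_q$ nor $\mathcal{S}$. *)

From Stdlib Require Import Reals ZArith List Classical ClassicalEpsilon.
Import ListNotations.
Open Scope R_scope.

Definition cell := (Z * Z)%type.
Definition cadd (m u : cell) : cell := (fst m + fst u, snd m + snd u)%Z.
Definition normInf (i : cell) : nat := Z.to_nat (Z.max (Z.abs (fst i)) (Z.abs (snd i))).

Definition config (A : Type) := cell -> A.

Definition finite_card (A : Type) (n : nat) : Prop :=
  exists l : list A, NoDup l /\ (forall a, In a l) /\ length l = n.

Definition diff_at {A} (x y : config A) (r : nat) : Prop :=
  exists i, normInf i = r /\ x i <> y i.

Definition min_diff {A} (x y : config A) : nat :=
  epsilon (inhabits 0%nat)
    (fun r => diff_at x y r /\ forall r', diff_at x y r' -> (r <= r')%nat).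

Definition dist {A} (x y : config A) : R :=
  if excluded_middle_informative (x = y) then 0 else (/ 2) ^ (min_diff x y).

Definition is_CA {A} (F : config A -> config A) : Prop :=
  exists (U : list cell) (f : list A -> A),
    forall x m, F x m = f (map (fun u => x (cadd m u)) U).

Definition is_CA_moore {A} (F : config A -> config A) (r : nat) : Prop :=
  exists (U : list cell) (f : list A -> A),
    (forall u, In u U <-> (normInf u <= r)%nat) /\
    forall x m, F x m = f (map (fun u => x (cadd m u)) U).

Definition equicontinuous_point {A} (F : config A -> config A) (x : config A) : Prop :=
  forall eps, eps > 0 -> exists delta, delta > 0 /\
    forall y, dist x y < delta ->
      forall n : nat, dist (Nat.iter n F x) (Nat.iter n F y) < eps.

Definition sensitive {A} (F : config A -> config A) : Prop :=
  exists eps, eps > 0 /\ forall delta, delta > 0 -> forall x,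
    exists y (n : nat), dist x y < delta /\ dist (Nat.iter n F x) (Nat.iter n F y) > eps.

Definition in_Eq {A} (F : config A -> config A) : Prop :=
  exists x, equicontinuous_point F x.
Definition in_S {A} (F : config A -> config A) : Prop := sensitive F.
Definition in_N {A} (F : config A -> config A) : Prop :=
  is_CA F /\ ~ in_Eq F /\ ~ in_S F.

(* The automaton F has twelve states: free cells carrying a bit, dying cells,
   inner cells and eight kinds of wall cells (the sides and corners of a
   square frame), and a Moore neighbourhood of radius 2.  A free cell copies
   the bit of its south neighbour, or else of its west neighbour, so bits flow
   north-east through the free region; a dying cell becomes free; an inner
   cell dies next to a cell that is neither inner nor a wall; a wall cell
   becomes free unless its neighbourhood is that of an intact frame.

   - F is not sensitive: a square block of inner cells framed by walls is
     fixed, and stays fixed whatever happens outside it, so perturbations far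
     from the origin never reach its centre.
   - F has no equicontinuous point: around any x, keep a large ball, put a
     ring of dying cells around it and free cells with bit b outside.  Kinds
     can only decrease, so they freeze after some time; from then on free
     cells receive their bit from outside, diagonal by diagonal, and a cell
     that is free at some time ends up equal to Free b.  Such a cell exists,
     so the choices b = false and b = true separate the orbits. *)
From Pilot Require Import Defs.
From Stdlib Require Import Reals ZArith List Lia Lra Classical ClassicalEpsilon
  FunctionalExtensionality Wf_nat.
Import ListNotations.

Section Metric.
Local Open Scope R_scope.
Context {A : Type}.

Lemma min_diff_spec (x y : config A) i : x i <> y i ->
  diff_at x y (min_diff x y) /\ forall r, diff_at x y r -> (min_diff x y <= r)%nat.
Proof.
  intro Hi. unfold min_diff. apply epsilon_spec.
  destruct (dec_inh_nat_subset_has_unique_least_element (diff_at x y))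
    as [r [Hr _]].
  - intro r. apply classic.
  - exists (normInf i), i. auto.
  - exists r. exact Hr.
Qed.

Lemma half_pow_pos n : 0 < (/2)^n.
Proof. apply pow_lt; lra. Qed.

Lemma half_pow_le a b : (b <= a)%nat -> (/2)^a <= (/2)^b.
Proof.
  induction 1 as [|a _ IH]; [lra|].
  simpl. pose proof (half_pow_pos a). lra.
Qed.

Lemma half_pow_small eps : 0 < eps -> exists N, (/2)^N < eps.
Proof.
  intro Heps. destruct (pow_lt_1_zero (/2)) with eps as [N HN]; auto.
  - rewrite Rabs_right; lra.
  - exists N. specialize (HN N (le_n _)).
    rewrite Rabs_right in HN; [exact HN|]. apply Rle_ge, pow_le; lra.
Qed.

Lemma dist_ge_diff (x y : config A) i : x i <> y i -> (/2)^(normInf i) <= Defs.dist x y.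
Proof.
  intro Hi. unfold Defs.dist. destruct (excluded_middle_informative (x = y)).
  - subst; contradiction.
  - apply half_pow_le. apply (min_diff_spec x y i Hi). exists i; auto.
Qed.

Lemma dist_le_agree (x y : config A) r :
  (forall i, (normInf i <= r)%nat -> x i = y i) -> Defs.dist x y <= (/2)^(S r).
Proof.
  intro Hxy. unfold Defs.dist. destruct (excluded_middle_informative (x = y)) as [|Hne].
  - left; apply half_pow_pos.
  - assert (exists i, x i <> y i) as [i Hi].
    { apply not_all_ex_not. intro Hall. apply Hne, functional_extensionality, Hall. }
    destruct (min_diff_spec x y i Hi) as [[j [Hj Hdiff]] _].
    apply half_pow_le. destruct (le_lt_dec (min_diff x y) r); [|lia].
    exfalso; apply Hdiff, Hxy; lia.
Qed.

Lemma dist_lt_agree (x y : config A) r : Defs.dist x y < (/2)^r ->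
  forall i, (normInf i <= r)%nat -> x i = y i.
Proof.
  intros Hd i Hi. apply NNPP. intro Hne.
  pose proof (dist_ge_diff x y i Hne). pose proof (half_pow_le _ _ Hi). lra.
Qed.

End Metric.

Section EventuallyConstant.
Context {B K : Type} (key : B -> K) (level : K -> nat).

Definition descending (g : nat -> B) : Prop :=
  forall t, key (g (S t)) = key (g t) \/ (level (key (g (S t))) < level (key (g t)))%nat.

Lemma descending_trans g : descending g -> forall t0 t, (t0 <= t)%nat ->
  key (g t) = key (g t0) \/ (level (key (g t)) < level (key (g t0)))%nat.
Proof.
  intros Hg t0 t Hle. induction Hle as [|t _ IH]; auto.
  destruct IH as [E|L]; destruct (Hg t) as [E'|L'].
  - left; congruence.
  - right; rewrite <- E; exact L'.
  - right; rewrite E'; exact L.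
  - right; lia.
Qed.

Lemma descending_eventually_constant g : descending g ->
  exists T, forall t, (T <= t)%nat -> key (g t) = key (g T).
Proof.
  intro Hg.
  assert (Hlev : forall n t0, level (key (g t0)) = n ->
            exists T, forall t, (T <= t)%nat -> key (g t) = key (g T)).
  { induction n as [n IH] using lt_wf_ind. intros t0 Ht0.
    destruct (classic (exists t1, (t0 <= t1)%nat /\ key (g t1) <> key (g t0)))
      as [[t1 [Hle Hne]]|Hconst].
    - destruct (descending_trans g Hg t0 t1 Hle) as [|Hlt]; [contradiction|].
      exact (IH (level (key (g t1))) ltac:(lia) t1 eq_refl).
    - exists t0. intros t Ht. apply NNPP. eauto. }
  exact (Hlev _ 0%nat eq_refl).
Qed.

End EventuallyConstant.

Lemma eventually_constant_list {I K : Type} (h : I -> nat -> K) (l : list I) :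
  (forall i, exists T, forall t, (T <= t)%nat -> h i t = h i T) ->
  exists T, forall i, In i l -> forall t, (T <= t)%nat -> h i t = h i T.
Proof.
  intro Hh. induction l as [|i l [T1 H1]].
  - exists 0%nat; intros i [].
  - destruct (Hh i) as [T0 H0]. exists (Nat.max T0 T1).
    intros j [<-|Hj] t Ht.
    + rewrite (H0 t), (H0 (Nat.max T0 T1)) by lia. reflexivity.
    + rewrite (H1 j Hj t), (H1 j Hj (Nat.max T0 T1)) by lia. reflexivity.
Qed.

Local Open Scope Z_scope.
Local Open Scope bool_scope.

Inductive side := Top | Bottom | Left | Right | TopLeft | TopRight | BottomLeft | BottomRight.

Inductive state := Free (b : bool) | Dying | Inner | Wall (d : side).

Definition kind (c : state) : nat :=
  match c with Free _ => 0 | Dying => 1 | Inner => 2 | Wall _ => 3 end.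

Definition isFree (c : state) : bool := match c with Free _ => true | _ => false end.
Definition isInner (c : state) : bool := match c with Inner => true | _ => false end.
Definition isWall (c : state) : bool := match c with Wall _ => true | _ => false end.
Definition isSolid (c : state) : bool := isInner c || isWall c.

(* The neighbourhood (north, south, east, west, north-west) that a wall cell
   with side d needs to survive: the one it sees in an intact square frame. *)
Definition wall_ok (d : side) (n s e w nw : state) : bool :=
  match d with
  | Top => isFree n && isInner s && isWall e && isWall w && isFree nw
  | Bottom => isInner n && isFree s && isWall e && isWall w
  | Left => isWall n && isWall s && isInner e && isFree w
  | Right => isWall n && isWall s && isFree e && isInner w
  | TopLeft => isFree n && isWall s && isWall e && isFree w && isFree nw
  | TopRight => isFree n && isWall s && isFree e && isWall w && isFree nw
  | BottomLeft => isWall n && isFree s && isWall e && isFree w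
  | BottomRight => isWall n && isFree s && isFree e && isWall w
  end.

(* Free cells copy
   the bit of a free south neighbour, else of a free west neighbour, so bits
   travel north-east through the free region; a dying cell becomes free; inner
   cells die next to a non-solid cell; walls break when the frame is broken. *)
Definition rule (c n s e w nw : state) : state :=
  match c with
  | Free _ =>
      match s with
      | Free b => Free b
      | _ => match w with Free b => Free b | _ => Free false end
      end
  | Dying => Free false
  | Inner => if isSolid n && isSolid s && isSolid e && isSolid w then Inner else Dying
  | Wall d => if wall_ok d n s e w nw then Wall d else Free false
  end.

Definition north (p : cell) : cell := cadd p (0, 1).
Definition south (p : cell) : cell := cadd p (0, -1).
Definition east (p : cell) : cell := cadd p (1, 0).
Definition west (p : cell) : cell := cadd p (-1, 0).
Definition northwest (p : cell) : cell := cadd p (-1, 1).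

Definition coords (M : nat) : list Z :=
  map (fun k => Z.of_nat k - Z.of_nat M) (seq 0 (2 * M + 1)).
Definition moore (M : nat) : list cell := list_prod (coords M) (coords M).

(* The local rule on the 5x5 window reads the centre (entry 12) and the
   neighbours used by rule. *)
Definition local_rule (l : list state) : state :=
  let entry k := nth k l (Free false) in
  rule (entry 12%nat) (entry 13%nat) (entry 11%nat) (entry 17%nat) (entry 7%nat) (entry 8%nat).

Definition F (z : config state) : config state :=
  fun m => local_rule (map (fun u => z (cadd m u)) (moore 2)).

Lemma F_spec z m :
  F z m = rule (z m) (z (north m)) (z (south m)) (z (east m)) (z (west m)) (z (northwest m)).
Proof.
  assert (Hm : cadd m (0, 0) = m) by (destruct m; unfold cadd; simpl; f_equal; lia).
  rewrite <- Hm at 2. reflexivity.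
Qed.

Lemma in_coords M a : In a (coords M) <-> - Z.of_nat M <= a <= Z.of_nat M.
Proof.
  unfold coords; rewrite in_map_iff; split.
  - intros [k [<- Hk]]. apply in_seq in Hk. lia.
  - intro Ha. exists (Z.to_nat (a + Z.of_nat M)). split; [lia|]. apply in_seq. lia.
Qed.

Lemma in_moore M p : In p (moore M) <-> (normInf p <= M)%nat.
Proof.
  destruct p as [a b]. unfold moore, normInf. split.
  - intro H. apply in_prod_iff in H. rewrite !in_coords in H. simpl. lia.
  - intro H. apply in_prod_iff. rewrite !in_coords. simpl in H. lia.
Qed.

Lemma F_moore : is_CA_moore F 2.
Proof.
  exists (moore 2), local_rule. split; [|reflexivity].
  intro u. apply in_moore.
Qed.

Lemma state_card : finite_card state 12.
Proof.
  exists [Free false; Free true; Dying; Inner; Wall Top; Wall Bottom; Wall Left;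
          Wall Right; Wall TopLeft; Wall TopRight; Wall BottomLeft; Wall BottomRight].
  split; [|split].
  - repeat constructor; simpl; intuition discriminate.
  - intros [[]| | |[]]; simpl; tauto.
  - reflexivity.
Qed.

Lemma rule_free b n s e w nw : isFree (rule (Free b) n s e w nw) = true.
Proof. simpl. destruct s; auto; destruct w; auto. Qed.

Lemma free_stays_free z p : isFree (z p) = true -> isFree (F z p) = true.
Proof. intro Hp. rewrite F_spec. destruct (z p); try discriminate. apply rule_free. Qed.

Lemma free_stays_free_iter y p t t' : (t <= t')%nat ->
  isFree (Nat.iter t F y p) = true -> isFree (Nat.iter t' F y p) = true.
Proof. induction 1; auto. intro Hp. apply free_stays_free; auto. Qed.

Lemma kind_tests u v : kind u = kind v ->
  isFree u = isFree v /\ isInner u = isInner v /\ isWall u = isWall v.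
Proof. destruct u, v; simpl; intuition discriminate. Qed.

Lemma rule_same_kind c n s e w nw n' s' e' w' nw' : isFree c = false ->
  kind n = kind n' -> kind s = kind s' -> kind e = kind e' -> kind w = kind w' ->
  kind nw = kind nw' -> rule c n s e w nw = rule c n' s' e' w' nw'.
Proof.
  intros Hc Hn Hs He Hw Hnw.
  destruct (kind_tests _ _ Hn) as (Fn & In & Wn), (kind_tests _ _ Hs) as (Fs & Is & Ws),
    (kind_tests _ _ He) as (Fe & Ie & We), (kind_tests _ _ Hw) as (Fw & Iw & Ww),
    (kind_tests _ _ Hnw) as (Fnw & Inw & Wnw).
  destruct c as [b| | |d]; simpl in Hc; try discriminate; simpl.
  - reflexivity.
  - unfold isSolid. rewrite In, Wn, Is, Ws, Ie, We, Iw, Ww. reflexivity.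
  - destruct d; simpl; rewrite ?Fn, ?In, ?Wn, ?Fs, ?Is, ?Ws, ?Fe, ?Ie, ?We, ?Fw, ?Iw, ?Ww,
      ?Fnw; reflexivity.
Qed.

Lemma neighbours_close p :
  (normInf (north p) <= normInf p + 1 /\ normInf (south p) <= normInf p + 1 /\
   normInf (east p) <= normInf p + 1 /\ normInf (west p) <= normInf p + 1 /\
   normInf (northwest p) <= normInf p + 1)%nat.
Proof.
  destruct p; unfold north, south, east, west, northwest, normInf, cadd; simpl.
  repeat split; lia.
Qed.

Definition in_square (K : Z) (q : cell) : bool :=
  (-K <=? fst q) && (fst q <=? K) && (-K <=? snd q) && (snd q <=? K).

Definition frame_side (K : Z) (p : cell) : side :=
  let (a, b) := p in
  if b =? K + 1 then
    (if a =? -(K+1) then TopLeft else if a =? K + 1 then TopRight else Top)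
  else if b =? -(K+1) then
    (if a =? -(K+1) then BottomLeft else if a =? K + 1 then BottomRight else Bottom)
  else if a =? -(K+1) then Left else Right.

Definition block (k : nat) (p : cell) : state :=
  if in_square (Z.of_nat k) p then Inner
  else if in_square (Z.of_nat k + 1) p then Wall (frame_side (Z.of_nat k) p)
  else Free false.

Ltac case_Z :=
  repeat (match goal with
          | |- context [Z.leb ?a ?b] => destruct (Z.leb_spec a b)
          | |- context [Z.eqb ?a ?b] => destruct (Z.eqb_spec a b)
          end; simpl; try (exfalso; lia)); try reflexivity.

Lemma block_fixed k p : in_square (Z.of_nat k + 1) p = true ->
  rule (block k p) (block k (north p)) (block k (south p)) (block k (east p))
       (block k (west p)) (block k (northwest p)) = block k p.
Proof.
  destruct p as [a b].
  unfold block, frame_side, in_square, north, south, east, west, northwest, cadd; simpl.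
  assert (0 <= Z.of_nat k) by lia. generalize dependent (Z.of_nat k).
  intros K HK Hin. case_Z.
Qed.

Lemma in_square_norm K p : in_square (Z.of_nat K) p = true <-> (normInf p <= K)%nat.
Proof.
  destruct p as [a b]; unfold in_square, normInf; simpl.
  rewrite !Bool.andb_true_iff, !Z.leb_le. lia.
Qed.

Lemma block_free k p : isFree (block k p) = true <-> (k + 1 < normInf p)%nat.
Proof.
  unfold block. replace (Z.of_nat k + 1) with (Z.of_nat (k + 1)) by lia.
  destruct (in_square (Z.of_nat k) p) eqn:E1;
    [apply in_square_norm in E1 | destruct (in_square (Z.of_nat (k + 1)) p) eqn:E2;
      [apply in_square_norm in E2|]];
    simpl; split; intro H; try discriminate; try lia; auto.
  apply Bool.not_true_iff_false in E2. rewrite in_square_norm in E2. lia.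
Qed.

Definition guarded (k : nat) (z : config state) : Prop :=
  (forall p, (normInf p <= k + 1)%nat -> z p = block k p) /\
  (forall p, normInf p = (k + 2)%nat -> isFree (z p) = true).

Lemma guarded_kind k z q : guarded k z -> (normInf q <= k + 2)%nat ->
  kind (z q) = kind (block k q).
Proof.
  intros [Hcore Hsphere] Hq. destruct (le_lt_dec (normInf q) (k + 1)).
  - rewrite Hcore; auto.
  - assert (Hz := Hsphere q ltac:(lia)).
    assert (Hb : isFree (block k q) = true) by (apply block_free; lia).
    destruct (z q), (block k q); try discriminate; reflexivity.
Qed.

(* Guarding is preserved: the block only sees the kinds of its neighbours,
   and those do not change on the free sphere. *)
Lemma guarded_step k z : guarded k z -> guarded k (F z).
Proof.
  intros Hg. pose proof Hg as [Hcore Hsphere]. split.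
  - intros p Hp. rewrite F_spec, (Hcore p Hp).
    assert (Hin : in_square (Z.of_nat k + 1) p = true).
    { replace (Z.of_nat k + 1) with (Z.of_nat (k + 1)) by lia. apply in_square_norm, Hp. }
    rewrite <- (block_fixed k p Hin) at 2.
    destruct (neighbours_close p) as (Hn & Hs & He & Hw & Hnw).
    apply rule_same_kind; try (apply (guarded_kind k); [exact Hg | lia]).
    destruct (isFree (block k p)) eqn:Hb; [|reflexivity].
    apply block_free in Hb. lia.
  - intros p Hp. apply free_stays_free, Hsphere, Hp.
Qed.

Lemma guarded_forever k y : guarded k y -> forall n, guarded k (Nat.iter n F y).
Proof. intros Hy n. induction n; [exact Hy | apply guarded_step, IHn]. Qed.

Lemma agree_block_guarded k y :
  (forall p, (normInf p <= k + 2)%nat -> y p = block k p) -> guarded k y.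
Proof.
  intros Hy. split.
  - intros p Hp. apply Hy. lia.
  - intros p Hp. rewrite Hy by lia. apply block_free. lia.
Qed.

(* The orbit of the block never differs near the origin from the orbit of a
   close enough configuration, so F is not sensitive. *)
Lemma not_sensitive : ~ sensitive F.
Proof.
  intros [eps [Heps Hsens]]. destruct (half_pow_small eps Heps) as [k Hk].
  destruct (Hsens ((/2)^(k+2))%R (half_pow_pos _) (block k)) as [y [n [Hd Hgt]]].
  assert (Hy : guarded k y).
  { apply agree_block_guarded. intros p Hp. symmetry. exact (dist_lt_agree _ _ _ Hd p Hp). }
  assert (Hb : guarded k (block k)) by (apply agree_block_guarded; reflexivity).
  destruct (guarded_forever k y Hy n) as [Hy_core _].
  destruct (guarded_forever k (block k) Hb n) as [Hb_core _].
  assert (Hle : (Defs.dist (Nat.iter n F (block k)) (Nat.iter n F y) <= (/2)^(S (k+1)))%R).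
  { apply dist_le_agree. intros i Hi. rewrite Hy_core, Hb_core by exact Hi. reflexivity. }
  pose proof (half_pow_le (S (k+1)) k ltac:(lia)). lra.
Qed.

Definition erase (x : config state) (R : nat) (b : bool) : config state := fun p =>
  if (normInf p <=? R)%nat then x p
  else if (normInf p <=? R + 2)%nat then Dying else Free b.

Lemma erase_inside x R b p : (normInf p <= R)%nat -> erase x R b p = x p.
Proof. intro Hp. unfold erase. destruct (Nat.leb_spec (normInf p) R); [reflexivity | lia]. Qed.

Lemma erase_outside x R b p : (R + 2 < normInf p)%nat -> erase x R b p = Free b.
Proof.
  intro Hp. unfold erase.
  destruct (Nat.leb_spec (normInf p) R), (Nat.leb_spec (normInf p) (R + 2)); lia || reflexivity.
Qed.

Lemma erase_outside_free x R b p t : (R + 2 < normInf p)%nat ->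
  isFree (Nat.iter t F (erase x R b) p) = true.
Proof.
  intro Hp. apply free_stays_free_iter with 0%nat; [lia|].
  simpl. rewrite erase_outside by exact Hp. reflexivity.
Qed.

(* Kinds only go down along an orbit: free < dying < inner, wall. *)
Definition kind_level (k : nat) : nat := match k with 0 => 0 | 1 => 1 | _ => 2 end%nat.

Lemma kind_descends z p : descending kind kind_level (fun t => Nat.iter t F z p).
Proof.
  intro t. simpl. rewrite F_spec. destruct (Nat.iter t F z p) as [b| | |d]; simpl.
  - destruct (Nat.iter t F z (south p)); auto; destruct (Nat.iter t F z (west p)); auto.
  - right; lia.
  - destruct (_ && _); auto.
  - destruct (wall_ok _ _ _ _ _ _); auto.
Qed.

(* Since the erasure is free outside a finite ball, all its kinds freeze at
   some common time. *)
Lemma erase_kinds_freeze x R b : exists T, forall t p, (T <= t)%nat ->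
  kind (Nat.iter (S t) F (erase x R b) p) = kind (Nat.iter t F (erase x R b) p).
Proof.
  destruct (eventually_constant_list (fun p t => kind (Nat.iter t F (erase x R b) p))
              (moore (R + 2))) as [T HT].
  { intro p. exact (descending_eventually_constant _ _ _ (kind_descends _ p)). }
  exists T. intros t p Ht.
  destruct (le_lt_dec (normInf p) (R + 2)) as [Hin | Hout].
  - apply in_moore in Hin. rewrite (HT p Hin (S t)), (HT p Hin t) by lia. reflexivity.
  - pose proof (erase_outside_free x R b p (S t) Hout).
    pose proof (erase_outside_free x R b p t Hout).
    destruct (Nat.iter (S t) F _ p), (Nat.iter t F _ p); try discriminate. reflexivity.
Qed.

Lemma kind_free u v : kind u = kind v -> isFree u = isFree v.
Proof. intro H. apply (kind_tests u v H). Qed.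

(* Below a free cell, a non-free cell keeps its kind only if it is a top wall
   or a top corner, whose rule requires its north-west neighbour, i.e. the
   west neighbour of the free cell, to be free. *)
Lemma frozen_south_routes_west z p : kind (F z (south p)) = kind (z (south p)) ->
  isFree (z p) = true -> isFree (z (south p)) = false -> isFree (z (west p)) = true.
Proof.
  intros Hfrozen Hp Hs. rewrite F_spec in Hfrozen.
  replace (north (south p)) with p in Hfrozen
    by (destruct p; unfold north, south, cadd; simpl; f_equal; lia).
  replace (northwest (south p)) with (west p) in Hfrozen
    by (destruct p; unfold northwest, south, west, cadd; simpl; f_equal; lia).
  destruct (z p); try discriminate.
  destruct (z (south p)) as [| | |d]; simpl in Hfrozen; try discriminate.
  destruct (wall_ok d _ _ _ _ _) eqn:Hok; [|discriminate].
  destruct d; simpl in Hok; try discriminate; rewrite !Bool.andb_true_iff in Hok; tauto.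
Qed.

Lemma free_cell_copies z p b : isFree (z p) = true ->
  (isFree (z (south p)) = true -> z (south p) = Free b) ->
  (isFree (z (west p)) = true -> z (west p) = Free b) ->
  isFree (z (south p)) = true \/ isFree (z (west p)) = true -> F z p = Free b.
Proof.
  intros Hp Hs Hw Hsw. rewrite F_spec. destruct (z p); try discriminate. simpl.
  destruct (z (south p)) eqn:Es; [apply Hs; reflexivity | ..];
    rewrite Hw by (destruct Hsw; [discriminate | assumption]); reflexivity.
Qed.

(* Bits travel north-east, so we measure progress along the diagonals. *)
Definition diag (p : cell) : Z := fst p + snd p.

Lemma diag_south p : diag (south p) = diag p - 1.
Proof. destruct p; unfold diag, south, cadd; simpl; lia. Qed.

Lemma diag_west p : diag (west p) = diag p - 1.
Proof. destruct p; unfold diag, west, cadd; simpl; lia. Qed.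

Lemma low_diag_far R p : diag p < -(2 * Z.of_nat R + 6) -> (R + 2 < normInf p)%nat.
Proof. destruct p; unfold diag, normInf; cbn [fst snd]; lia. Qed.

(* Once kinds are frozen at time T, a free cell on a low enough diagonal,
   or free late enough, carries b: by induction on time, it copies b from a
   free south or west neighbour, one diagonal lower. *)
Lemma erase_free_cells_carry x R b T
  (Hfreeze : forall t p, (T <= t)%nat ->
     kind (Nat.iter (S t) F (erase x R b) p) = kind (Nat.iter t F (erase x R b) p)) :
  forall t p, isFree (Nat.iter t F (erase x R b) p) = true ->
  diag p < -(2 * Z.of_nat R + 6) \/ Z.of_nat T + diag p + (2 * Z.of_nat R + 6) + 2 <= Z.of_nat t ->
  Nat.iter t F (erase x R b) p = Free b.
Proof.
  induction t as [|t IH]; intros p Hfree Hp.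
  - apply erase_outside, low_diag_far. lia.
  - set (z := Nat.iter t F (erase x R b)) in *. change (Nat.iter (S t) F _) with (F z) in *.
    assert (Hfar : forall q, diag q < -(2 * Z.of_nat R + 6) -> isFree (z q) = true)
      by (intros q Hq; apply erase_outside_free, low_diag_far, Hq).
    apply free_cell_copies.
    + destruct (Z_lt_le_dec (diag p) (-(2 * Z.of_nat R + 6))); [apply Hfar; lia|].
      rewrite <- (kind_free (F z p) (z p) (Hfreeze t p ltac:(lia))). exact Hfree.
    + intro Hs. apply IH; [exact Hs | rewrite diag_south; lia].
    + intro Hw. apply IH; [exact Hw | rewrite diag_west; lia].
    + destruct (isFree (z (south p))) eqn:Hs; [left; reflexivity | right].
      destruct (Z_lt_le_dec (diag p) (-(2 * Z.of_nat R + 5))).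
      * rewrite Hfar in Hs by (rewrite diag_south; lia). discriminate.
      * apply frozen_south_routes_west; auto; [apply Hfreeze; lia|].
        rewrite <- (kind_free (F z p) (z p) (Hfreeze t p ltac:(lia))). exact Hfree.
Qed.

Lemma erase_settles x R b c t0 : isFree (Nat.iter t0 F (erase x R b) c) = true ->
  exists N, forall n, (N <= n)%nat -> Nat.iter n F (erase x R b) c = Free b.
Proof.
  intro Hc. destruct (erase_kinds_freeze x R b) as [T Hfreeze].
  exists (Nat.max t0 (Z.to_nat (Z.of_nat T + diag c + (2 * Z.of_nat R + 6) + 2))).
  intros n Hn. apply (erase_free_cells_carry x R b T Hfreeze).
  - apply free_stays_free_iter with t0; [lia | exact Hc].
  - right. lia.
Qed.

Lemma rule_not_wall c n s e w nw : isWall c = false -> isWall (rule c n s e w nw) = false.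
Proof.
  destruct c; simpl; intro Hc; try discriminate; auto.
  - destruct s; auto; destruct w; auto.
  - destruct (_ && _); auto.
Qed.

Lemma wall_ok_needs_free d n s e w nw : wall_ok d n s e w nw = true ->
  isFree n || isFree s || isFree e || isFree w = true.
Proof.
  destruct d; simpl; rewrite ?Bool.andb_true_iff, ?Bool.orb_true_iff; tauto.
Qed.

Lemma erase_not_free x R b q : (forall p, isFree (x p) = false) ->
  (normInf q <= R + 2)%nat -> isFree (erase x R b q) = false.
Proof.
  intros Hx Hq. unfold erase. destruct (Nat.leb_spec (normInf q) R); [apply Hx|].
  destruct (Nat.leb_spec (normInf q) (R + 2)); [reflexivity | lia].
Qed.

Lemma erase_no_walls x R b (Hx : forall p, isFree (x p) = false) t p :
  (1 <= t)%nat -> isWall (Nat.iter t F (erase x R b) p) = false.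
Proof.
  induction 1 as [|t _ IH]; simpl Nat.iter; rewrite F_spec; [|apply rule_not_wall, IH].
  destruct (erase x R b p) as [| | |d] eqn:Ep; try (apply rule_not_wall; reflexivity).
  assert (Hp : (normInf p <= R)%nat).
  { unfold erase in Ep. destruct (Nat.leb_spec (normInf p) R); [assumption|].
    destruct (Nat.leb_spec (normInf p) (R + 2)); discriminate. }
  destruct (neighbours_close p) as (Hn & Hs & He & Hw & _).
  simpl. destruct (wall_ok d _ _ _ _ _) eqn:Hok; [|reflexivity].
  apply wall_ok_needs_free in Hok.
  rewrite !(erase_not_free x R b) in Hok by (assumption || lia). discriminate.
Qed.

Lemma rule_inner_dies n s e w nw : isFree e = true -> rule Inner n s e w nw = Dying.
Proof.
  destruct e; try discriminate. intros _. simpl.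
  destruct (isSolid n), (isSolid s), (isSolid w); reflexivity.
Qed.

(* Without free cells in x, freedom spreads from the outside along the
   positive horizontal axis, one cell every two steps. *)
Lemma erase_ray x R b (Hx : forall p, isFree (x p) = false) d : (d <= R + 3)%nat ->
  isFree (Nat.iter (2 * d + 1) F (erase x R b) (Z.of_nat (R + 3 - d), 0)) = true.
Proof.
  induction d as [|d IH]; intro Hd.
  - apply erase_outside_free. unfold normInf; cbn [fst snd]; lia.
  - set (q := (Z.of_nat (R + 3 - S d), 0)).
    assert (Hq : east q = (Z.of_nat (R + 3 - d), 0))
      by (unfold q, east, cadd; cbn [fst snd]; f_equal; lia).
    assert (Heast := IH ltac:(lia)). rewrite <- Hq in Heast.
    set (z := Nat.iter (2 * d + 1) F (erase x R b)) in *.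
    replace (2 * S d + 1)%nat with (S (S (2 * d + 1))) by lia.
    change (Nat.iter (S (S (2 * d + 1))) F (erase x R b)) with (F (F z)).
    assert (Hwall := erase_no_walls x R b Hx (2 * d + 1) q ltac:(lia)). fold z in Hwall.
    destruct (z q) eqn:Ez; try discriminate.
    + apply free_stays_free, free_stays_free. rewrite Ez; reflexivity.
    + apply free_stays_free. rewrite F_spec, Ez. reflexivity.
    + rewrite F_spec, (F_spec z q), Ez, rule_inner_dies by exact Heast. reflexivity.
Qed.

Lemma erase_eventually_free x R b c : (normInf c <= R)%nat ->
  isFree (x c) = true \/ ((forall p, isFree (x p) = false) /\ c = (0, 0)) ->
  exists t0, isFree (Nat.iter t0 F (erase x R b) c) = true.
Proof.
  intros Hc [Hfree | [Hx ->]].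
  - exists 0%nat. simpl. rewrite erase_inside by exact Hc. exact Hfree.
  - exists (2 * (R + 3) + 1)%nat. pose proof (erase_ray x R b Hx (R + 3) ltac:(lia)) as Hray.
    replace (R + 3 - (R + 3))%nat with 0%nat in Hray by lia. exact Hray.
Qed.

(* Erasing x beyond a large radius with the two different bits yields two
   configurations close to x whose orbits eventually differ at a fixed cell,
   so x is not an equicontinuous point. *)
Lemma no_equicontinuous_point : ~ (exists x, equicontinuous_point F x).
Proof.
  intros [x Heq].
  assert (Hc : exists c, isFree (x c) = true \/ ((forall p, isFree (x p) = false) /\ c = (0, 0))).
  { destruct (classic (exists p, isFree (x p) = true)) as [[c Hc] | Hno]; [eauto|].
    exists (0, 0); right; split; [|reflexivity].
    intro p. apply Bool.not_true_iff_false. eauto. }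
  destruct Hc as [c Hc].
  destruct (Heq ((/2)^(normInf c))%R (half_pow_pos _)) as [delta [Hdelta Hclose]].
  destruct (half_pow_small delta Hdelta) as [N HN].
  set (R := Nat.max (normInf c) N).
  assert (Hnear : forall b, (Defs.dist x (erase x R b) < delta)%R).
  { intro b. assert (Defs.dist x (erase x R b) <= (/2)^(S R))%R.
    { apply dist_le_agree. intros i Hi. symmetry. apply erase_inside, Hi. }
    pose proof (half_pow_le (S R) N ltac:(lia)). lra. }
  assert (Hsettle : forall b, exists Nb, forall n, (Nb <= n)%nat ->
                      Nat.iter n F (erase x R b) c = Free b).
  { intro b. destruct (erase_eventually_free x R b c ltac:(lia) Hc) as [t0 Ht0].
    exact (erase_settles x R b c t0 Ht0). }
  destruct (Hsettle false) as [N0 H0], (Hsettle true) as [N1 H1].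
  set (n := Nat.max N0 N1).
  assert (Hsplit : Nat.iter n F x c <> Nat.iter n F (erase x R false) c \/
                   Nat.iter n F x c <> Nat.iter n F (erase x R true) c).
  { rewrite (H0 n), (H1 n) by lia.
    destruct (classic (Nat.iter n F x c = Free false)) as [E | E];
      [right; rewrite E; discriminate | left; exact E]. }
  destruct Hsplit as [Hne | Hne];
    [pose proof (Hclose _ (Hnear false) n) | pose proof (Hclose _ (Hnear true) n)];
    pose proof (dist_ge_diff _ _ c Hne); lra.
Qed.

Theorem mainTheorem1 :
  exists (A : Type) (F : config A -> config A),
    finite_card A 12 /\ is_CA_moore F 2 /\ is_CA F /\
    ~ sensitive F /\ ~ (exists x, equicontinuous_point F x) /\ in_N F.
Proof.
  exists state, F.
  assert (HCA : is_CA F).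
  { destruct F_moore as [U [f [_ Hf]]]. exists U, f. exact Hf. }
  exact (conj state_card (conj F_moore (conj HCA (conj not_sensitive
           (conj no_equicontinuous_point
             (conj HCA (conj no_equicontinuous_point not_sensitive))))))).
Qed.
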